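(* Let $(\Omega,\mathcal R)$ be a bidirectional chemical network. Then there exists a completion $(\Omega_c,\mathcal R_c)$ of $(\Omega,\mathcal R)$ that is conservative, such that every $R\in\mathcal R_c$ satisfies $I(R)\neq\emptyset$ and $F(R)\neq\emptyset$, and that has no cycles (its cycle space is $\{0\}$). Moreover, $\pi_\Omega R\neq0$ for every $R\in\mathcal R_c$, and every $R\in\mathcal R$ is the image $\pi_\Omega\bar R$ of exactly one $\bar R\in\mathcal R_c$.
   Context: A chemical network is $(\Omega,\mathcal R)$ with $\Omega=\{1,\dots,N\}$ (or a finite index set) and $\mathcal R$ a finite set of nonzero integer vectors indexed by $\Omega$; each substance appears in some reaction. $I(R)=\{i:R(i)<0\}$, $F(R)=\{i:R(i)>0\}$. Bidirectional: $R\in\mathcal R\Rightarrow-R\in\mathcal R$. $\mathcal R_s$ contains exactly one of each pair $\{R,-R\}$; the matrix of reactions has the elements of $\mathcal R_s$ as columns and the cycle space is its kernel. The space of conservation laws is $\mathcal M=(\mathrm{span}\,\mathcal R)^\perp$; the network is conservative if $\mathcal M\cap(0,\infty)^{\Omega}\neq\emptyset$. For $A\subset\Omega_c$, $\pi_A v=(v(i))_{i\in A}$. A completion of $(\Omega,\mathcal R)$ is a chemical network $(\Omega_c,\mathcal R_c)$ with $\Omega\subset\Omega_c$ and $\mathcal R=\{\pi_\Omega R:R\in\mathcal R_c\}$. *)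

From HB Require Import structures.
From mathcomp Require Import all_boot all_order all_algebra.
From mathcomp Require Import finmap.
From mathcomp Require Import reals.

Set Implicit Arguments.
Unset Strict Implicit.
Unset Printing Implicit Defensive.

Import Order.TTheory GRing.Theory Num.Theory.
Local Open Scope ring_scope.
Local Open Scope fset_scope.

Notation reaction S := {ffun S -> int}.

Definition chem_network (S : finType) (Rs : {fset reaction S}) : Prop :=
  (forall r, r \in Rs -> r != 0) /\
  (forall i : S, exists2 r, r \in Rs & r i != 0).

Definition bidirectional (S : finType) (Rs : {fset reaction S}) : Prop :=
  forall r, r \in Rs -> - r \in Rs.

Definition I_set (S : finType) (r : reaction S) : {set S} := [set i | r i < 0].
Definition F_set (S : finType) (r : reaction S) : {set S} := [set i | 0 < r i].

Definition proj (S Sc : finType) (e : S -> Sc) (r : reaction Sc) : reaction S :=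
  [ffun i => r (e i)].

(* (Omega_c, Rc) is a completion of (Omega, Rs), with Omega identified with a
   subset of Omega_c through the injection e. *)
Definition completion (S Sc : finType) (e : S -> Sc)
    (Rs : {fset reaction S}) (Rc : {fset reaction Sc}) : Prop :=
  injective e /\ chem_network Rc /\
  (forall r, r \in Rc -> proj e r \in Rs) /\
  (forall r, r \in Rs -> exists2 rb, rb \in Rc & proj e rb = r).

(* conservative: some strictly positive (real) vector lies in
   M = (span Rc)^perp. *)
Definition conservative (R : realType) (S : finType) (Rs : {fset reaction S})
  : Prop :=
  exists m : S -> R, (forall i, 0 < m i) /\
    (forall r, r \in Rs -> \sum_(i : S) m i * (r i)%:~R = 0).

Definition is_Rs (S : finType) (Rs Rsub : {fset reaction S}) : Prop :=
  Rsub `<=` Rs /\ (forall r, r \in Rs -> (r \in Rsub) (+) (- r \in Rsub)).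

Definition no_cycles (R : realType) (S : finType) (Rs : {fset reaction S})
  : Prop :=
  forall Rsub, is_Rs Rs Rsub ->
  forall c : reaction S -> R,
    (forall i : S, \sum_(r <- Rsub) c r * (r i)%:~R = 0) ->
    forall r, r \in Rsub -> c r = 0.

From HB Require Import structures.
From mathcomp Require Import all_boot all_order all_algebra.
From mathcomp Require Import finmap.
From mathcomp Require Import reals.
Import Order.TTheory GRing.Theory Num.Theory.
Local Open Scope ring_scope.
Local Open Scope fset_scope.
Set Implicit Arguments.
Unset Strict Implicit.

(* For every reaction r add a fresh substance X_r, and complete r by letting
   it produce X_r and consume X_(-r).  The coordinate X_r is then nonzero only
   in the completions of r and -r, so any choice of R_s meets it in exactly one
   reaction, which rules out cycles.  Conservation holds with mass 1 on the old
   substances and mass 1 + max(0, -c(r)) on X_r, where c(r) is the sum of the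
   coefficients of r: the completion of r then changes the total mass by
   c(r) + max(0, -c(r)) - max(0, c(r)) = 0. *)

Lemma ffun_eqNr (T : finType) (R : numDomainType) (f : {ffun T -> R}) :
  (f == - f) = (f == 0).
Proof.
apply/eqP/eqP => [fN|->]; last by rewrite oppr0.
apply/ffunP => t; apply/eqP; rewrite ffunE.
have : f t *+ 2 == 0 by rewrite mulr2n {2}fN ffunE subrr.
by rewrite mulrn_eq0.
Qed.

Lemma max0N_subr (R : realDomainType) (x : R) :
  Num.max 0 (- x) - Num.max 0 x = - x.
Proof.
have [x_ge0|x_lt0] := lerP 0 x.
  by rewrite max_l ?oppr_le0 // sub0r.
by rewrite max_r ?oppr_ge0 ?ltW // subr0.
Qed.

Lemma big_fset_mul_eq (R : pzSemiRingType) (T : choiceType) (A : {fset T})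
    (F : T -> R) (a : T) :
  \sum_(s <- A) F s * (s == a)%:R = (a \in A)%:R * F a.
Proof.
have [aA|aNA] := boolP (a \in A).
  rewrite (big_fsetD1 a aA) eqxx mulr1 mul1r big_seq big1 => [|s].
    exact: addr0.
  by rewrite in_fsetD1 => /andP[/negPf -> _]; rewrite mulr0.
rewrite mul0r big_seq big1 // => s sA.
have /negPf -> : s != a by apply: contraNneq aNA => <-.
by rewrite mulr0.
Qed.

Definition marker (V : zmodType) (r s : V) : int := (s == r)%:R - (s == - r)%:R.

Section Marker.

Variable V : zmodType.
Implicit Types r s : V.

Lemma markerC r s : marker r s = marker s r.
Proof. by rewrite /marker [s == r]eq_sym [s == - r]eq_sym eqr_oppLR. Qed.

Lemma markerNl r s : marker (- r) s = - marker r s.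
Proof. by rewrite /marker opprK opprB addrC. Qed.

Lemma marker_id r : r != - r -> marker r r = 1.
Proof. by move=> /negPf rNr; rewrite /marker eqxx rNr subr0. Qed.

Lemma marker_idN r : r != - r -> marker r (- r) = -1.
Proof. by rewrite eq_sym => /negPf Nrr; rewrite /marker eqxx Nrr sub0r. Qed.

Lemma sum_marker (R : pzRingType) (A : {fset V}) (F : V -> R) r :
  \sum_(s <- A) F s * (marker r s)%:~R =
    (r \in A)%:R * F r - (- r \in A)%:R * F (- r).
Proof.
rewrite -!big_fset_mul_eq -sumrB; apply: eq_bigr => s _.
by rewrite /marker rmorphB /= !rmorph_nat mulrBr.
Qed.

End Marker.

Section Completion.

Variables (S : finType) (Rs : {fset reaction S}).

Definition completed_species : finType := (S + Rs)%type.

Definition lift (r : reaction S) : reaction completed_species :=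
  [ffun z => match z with inl i => r i | inr t => marker r (val t) end].

Definition lifted : {fset reaction completed_species} := [fset lift r | r in Rs].

Lemma proj_lift r : proj inl (lift r) = r.
Proof. by apply/ffunP => i; rewrite !ffunE. Qed.

Lemma lift_inj : injective lift.
Proof. exact: can_inj proj_lift. Qed.

Lemma liftN r : lift (- r) = - lift r.
Proof. by apply/ffunP => -[i|t]; rewrite !ffunE //= markerNl. Qed.

Lemma marker_lift r s : marker (lift r) (lift s) = marker r s.
Proof. by rewrite /marker -liftN !(inj_eq lift_inj). Qed.

Lemma lifted_inr y (t : Rs) :
  y \in lifted -> y (inr t) = marker (lift (val t)) y.
Proof. by move=> /imfsetP[s _ ->]; rewrite marker_lift markerC ffunE. Qed.

Lemma proj_lifted y : y \in lifted -> proj inl y \in Rs.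
Proof. by move=> /imfsetP[r rRs ->]; rewrite proj_lift. Qed.

Lemma lift_in_lifted r : r \in Rs -> lift r \in lifted.
Proof. exact: in_imfset. Qed.

Lemma lifted_unique_preimage r :
  r \in Rs -> exists! y, y \in lifted /\ proj inl y = r.
Proof.
move=> rRs; exists (lift r).
split; first by split; [apply: lift_in_lifted | apply: proj_lift].
by move=> y [/imfsetP[s _ ->]]; rewrite proj_lift => ->.
Qed.

Lemma lifted_no_cycles (R : realType) : no_cycles R lifted.
Proof.
move=> Rsub [sub_lifted one_of_pair] c c_cycle x xRsub.
have x_lifted : x \in lifted := fsubsetP sub_lifted x xRsub.
have NxNRsub : - x \notin Rsub by have := one_of_pair x x_lifted; rewrite xRsub.
have /imfsetP[r rRs x_def] := x_lifted.
have := c_cycle (inr [` rRs]).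
rewrite big_seq (eq_bigr (fun y => c y * (marker x y)%:~R)); last first.
  by move=> y /(fsubsetP sub_lifted) /lifted_inr ->; rewrite x_def.
by rewrite -big_seq sum_marker xRsub (negPf NxNRsub) mul0r subr0 mul1r.
Qed.

Hypothesis Rs_nonzero : forall r, r \in Rs -> r != 0.
Hypothesis Rs_bidirectional : bidirectional Rs.

Lemma Rs_neqN r : r \in Rs -> r != - r.
Proof. by move=> /Rs_nonzero; rewrite ffun_eqNr. Qed.

Lemma lift_inr_id (t : Rs) : lift (val t) (inr t) = 1.
Proof. by rewrite ffunE /= marker_id // (Rs_neqN (valP t)). Qed.

Lemma lifted_nonzero y : y \in lifted -> proj inl y != 0.
Proof. by move=> /proj_lifted /Rs_nonzero. Qed.

Lemma lifted_network :
  (forall i, exists2 r, r \in Rs & r i != 0) -> chem_network lifted.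
Proof.
move=> Rs_cover; split.
  move=> y /lifted_nonzero; apply: contraNneq => ->.
  by apply/eqP/ffunP => i; rewrite !ffunE.
move=> [i|t].
  have [r rRs ri] := Rs_cover i.
  by exists (lift r); [apply: lift_in_lifted | rewrite ffunE].
by exists (lift (val t)); [apply/lift_in_lifted/valP | rewrite lift_inr_id].
Qed.

Lemma lifted_completion :
  (forall i, exists2 r, r \in Rs & r i != 0) -> completion inl Rs lifted.
Proof.
move=> Rs_cover; split; first by move=> i j [].
split; first exact: lifted_network.
split; first exact: proj_lifted.
by move=> r rRs; exists (lift r); [apply: lift_in_lifted | apply: proj_lift].
Qed.

Lemma lifted_reactants_products y :
  y \in lifted -> I_set y != set0 /\ F_set y != set0.
Proof.
move=> /imfsetP[r rRs ->]; have NrRs := Rs_bidirectional rRs.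
split; apply/set0Pn.
  by exists (inr [` NrRs]); rewrite inE ffunE /= marker_idN ?Rs_neqN.
by exists (inr [` rRs]); rewrite inE ffunE /= marker_id ?Rs_neqN.
Qed.

Section Conservation.

Variable R : realType.

Definition content (r : reaction S) : R := \sum_i (r i)%:~R.

Lemma contentN r : content (- r) = - content r.
Proof.
by rewrite /content -sumrN; apply: eq_bigr => i _; rewrite ffunE intrN.
Qed.

Definition marker_mass (s : reaction S) : R := 1 + Num.max 0 (- content s).

Definition lifted_mass (z : completed_species) : R :=
  match z with inl _ => 1 | inr t => marker_mass (val t) end.

Lemma lifted_mass_gt0 z : 0 < lifted_mass z.
Proof.
case: z => [//|t] /=.
by rewrite (lt_le_trans ltr01) // lerDl le_max lexx.
Qed.

Lemma lifted_mass_conserved r : r \in Rs ->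
  \sum_z lifted_mass z * (lift r z)%:~R = 0.
Proof.
move=> rRs; rewrite big_sumType /=.
have -> : \sum_i 1 * (lift r (inl i))%:~R = content r.
  by apply: eq_bigr => i _; rewrite ffunE mul1r.
have -> : \sum_(t : Rs) marker_mass (val t) * (lift r (inr t))%:~R =
          \sum_(s <- Rs) marker_mass s * (marker r s)%:~R.
  by rewrite big_seq_fsetE; apply: eq_bigr => t _; rewrite ffunE.
rewrite sum_marker rRs (Rs_bidirectional rRs) !mulr1n !mul1r /marker_mass.
by rewrite contentN opprK opprD addrACA subrr add0r max0N_subr subrr.
Qed.

Lemma lifted_conservative : conservative R lifted.
Proof.
exists lifted_mass; split; first exact: lifted_mass_gt0.
by move=> y /imfsetP[r rRs ->]; apply: lifted_mass_conserved.
Qed.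

End Conservation.

End Completion.

Theorem proposition6p2 (R : realType) (S : finType) (Rs : {fset {ffun S -> int}}) :
  chem_network Rs -> bidirectional Rs ->
  exists (Sc : finType) (e : S -> Sc) (Rc : {fset {ffun Sc -> int}}),
    completion e Rs Rc /\
    conservative R Rc /\
    (forall r, r \in Rc -> I_set r != set0 /\ F_set r != set0) /\
    no_cycles R Rc /\
    (forall r, r \in Rc -> proj e r != 0) /\
    (forall r, r \in Rs -> exists! rb, rb \in Rc /\ proj e rb = r).
Proof.
move=> [Rs_nonzero Rs_cover] Rs_bidir.
exists (completed_species Rs), inl, (lifted Rs).
split; first exact: lifted_completion.
split; first exact: lifted_conservative.
split; first exact: lifted_reactants_products.
split; first exact: lifted_no_cycles.
split; first exact: lifted_nonzero.
exact: lifted_unique_preimage.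
Qed.
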